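(* Let $N\ge 2$ and let $\mathcal G$ be a connected undirected graph on $\{1,\dots,N\}$ with positive edge weights $b_{ij}$, with weighted Laplacian $L_B$ having eigenvalues $0=\lambda_1<\lambda_2\le\dots\le\lambda_N$. Let $m,\tau,k,\alpha,\gamma>0$. Then the systems $H_{\mathrm{std}}$ and $H_{\mathrm{DAPI}}$ (defined in the context) have finite $\mathcal H_2$ norms given by $$\|H_{\mathrm{std}}\|_2^2=\frac{\alpha}{2m}(N-1),$$ $$\|H_{\mathrm{DAPI}}\|_2^2=\frac{\alpha}{2m}\sum_{n=2}^N \frac{1}{1+\dfrac{\gamma\tau\lambda_n+k}{\gamma\lambda_n(\gamma\tau\lambda_n+k)+k^2 m\lambda_n}}.$$
   Context: $L_B$ is the weighted graph Laplacian: $(L_B)_{ii}=\sum_{j\sim i} b_{ij}$, $(L_B)_{ij}=-b_{ij}$ if $i\sim j$, $i\neq j$, and $0$ otherwise. Set $L_G=\alpha L_B$ (conductance Laplacian, uniform resistance-to-reactance ratio $\alpha$) and $L_C=\gamma L_B$ (communication Laplacian); $L_G^{1/2}$ is the unique positive semidefinite square root of $L_G$. $I$ is the $N\times N$ identity. Standard droop control system $H_{\mathrm{std}}$: state $(\theta,\omega)\in\mathbb R^{2N}$, input $w\in\mathbb R^N$, output $y\in\mathbb R^N$, $\dot\theta=\omega$, $\dot\omega=-\tfrac{m}{\tau}L_B\theta-\tfrac1\tau\omega+\tfrac1\tau w$, $y=L_G^{1/2}\theta$; i.e. $A_{\mathrm{std}}=\begin{bmatrix}0&I\\-\frac m\tau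 L_B&-\frac1\tau I\end{bmatrix}$, $B_{\mathrm{std}}=\begin{bmatrix}0\\ \frac1\tau I\end{bmatrix}$, $C_{\mathrm{std}}=\begin{bmatrix}L_G^{1/2}&0\end{bmatrix}$. Distributed averaging PI (DAPI) system $H_{\mathrm{DAPI}}$: state $(\theta,\omega,\Omega)\in\mathbb R^{3N}$, $\dot\theta=\omega$, $\dot\omega=-\tfrac m\tau L_B\theta-\tfrac1\tau\omega+\tfrac1\tau\Omega+\tfrac1\tau w$, $\dot\Omega=-\tfrac1k\omega-\tfrac1k L_C\Omega$, $y=L_G^{1/2}\theta$; i.e. $A_{\mathrm{DAPI}}=\begin{bmatrix}0&I&0\\-\frac m\tau L_B&-\frac1\tau I&\frac1\tau I\\0&-\frac1k I&-\frac1k L_C\end{bmatrix}$, $B_{\mathrm{DAPI}}=\begin{bmatrix}0\\\frac1\tau I\\0\end{bmatrix}$, $C_{\mathrm{DAPI}}=\begin{bmatrix}L_G^{1/2}&0&0\end{bmatrix}$. For a system $(A,B,C)$, $\|H\|_2^2:=\int_0^\infty \operatorname{tr}\big(Ce^{At}BB^Te^{A^Tt}C^T\big)\,dt$ (the zero mode of $L_B$ is unobservable from $y$). This quantity equals the steady-state expected value $\lim_{t\to\infty}\mathbb E[y^Ty]$ under unit white-noise input $w$, interpreted as expected transient resistive power loss $\theta^TL_G\theta$. *)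

From Stdlib Require Import Reals Lra Lia Arith ClassicalEpsilon.
Open Scope R_scope.

Fixpoint rsum (n : nat) (f : nat -> R) : R :=
  match n with O => 0 | S n' => rsum n' f + f n' end.

Definition Mat := nat -> nat -> R.

Definition mmul (k : nat) (A B : Mat) : Mat :=
  fun i j => rsum k (fun l => A i l * B l j).
Definition mtr (A : Mat) : Mat := fun i j => A j i.
Definition mid : Mat := fun i j => if Nat.eqb i j then 1 else 0.
Definition mscale (c : R) (A : Mat) : Mat := fun i j => c * A i j.
Definition mzero : Mat := fun _ _ => 0.
Definition trace (n : nat) (A : Mat) : R := rsum n (fun i => A i i).

Definition meq (n m : nat) (A B : Mat) : Prop :=
  forall i j, (i < n)%nat -> (j < m)%nat -> A i j = B i j.

Fixpoint mpow (n : nat) (A : Mat) (k : nat) : Mat :=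
  match k with O => mid | S k' => mmul n A (mpow n A k') end.

(* limit of a real sequence (chosen by classical choice; the true limit when it converges) *)
Definition lim (u : nat -> R) : R :=
  epsilon (inhabits 0) (fun l => Un_cv u l).

Definition mexp (n : nat) (A : Mat) (t : R) : Mat :=
  fun i j => lim (fun K => sum_f_R0 (fun k => t ^ k / INR (fact k) * mpow n A k i j) K).

Definition msym (n : nat) (A : Mat) : Prop := meq n n A (mtr A).
Definition mpsd (n : nat) (A : Mat) : Prop :=
  msym n A /\ forall x : nat -> R, 0 <= rsum n (fun i => rsum n (fun j => x i * A i j * x j)).

(* the positive semidefinite square root (unique when A is PSD) *)
Definition msqrt (n : nat) (A : Mat) : Mat :=
  epsilon (inhabits mzero) (fun S => mpsd n S /\ meq n n (mmul n S S) A).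

Definition improper_int_0_inf (f : R -> R) (l : R) : Prop :=
  (forall T, 0 <= T -> exists pr : Riemann_integrable f 0 T, True) /\
  forall eps, 0 < eps -> exists T0, forall T (pr : Riemann_integrable f 0 T),
      T0 <= T -> Rabs (RiemannInt pr - l) < eps.

(* ||H||_2^2 = v  (finite) for the system (A,B,C) with state dim n, input dim p, output dim q *)
Definition H2sq_is (n p q : nat) (A B C : Mat) (v : R) : Prop :=
  improper_int_0_inf
    (fun t => trace q
       (mmul n (mmul p (mmul n (mmul n C (mexp n A t)) B) (mtr B))
               (mmul n (mexp n (mtr A) t) (mtr C)))) v.

(* block matrix with N x N blocks: F bi bj is the (bi,bj) block *)
Definition blk (N : nat) (F : nat -> nat -> Mat) : Mat :=
  fun i j => F (Nat.div i N) (Nat.div j N) (Nat.modulo i N) (Nat.modulo j N).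

(* weighted graph Laplacian on {0..N-1}; b i j > 0 iff i ~ j (i <> j) *)
Definition lap (N : nat) (b : Mat) : Mat :=
  fun i j => if Nat.eqb i j then rsum N (fun l => if Nat.eqb l i then 0 else b i l)
             else - b i j.

Inductive reach (N : nat) (b : Mat) (i : nat) : nat -> Prop :=
| reach_refl : reach N b i i
| reach_step : forall j k, reach N b i j -> (j < N)%nat -> (k < N)%nat -> j <> k ->
    0 < b j k -> reach N b i k.

Definition connected (N : nat) (b : Mat) : Prop :=
  forall i j, (i < N)%nat -> (j < N)%nat -> reach N b i j.

Definition mdiag (d : nat -> R) : Mat := fun i j => if Nat.eqb i j then d i else 0.

(* lam 0, ..., lam (N-1) are the eigenvalues (with multiplicity) of the symmetric matrix L *)
Definition sym_eigenvalues (N : nat) (L : Mat) (lam : nat -> R) : Prop :=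
  exists U : Mat, meq N N (mmul N (mtr U) U) mid /\
                  meq N N L (mmul N (mmul N U (mdiag lam)) (mtr U)).

Definition A_std (N : nat) (m tau : R) (LB : Mat) : Mat :=
  blk N (fun bi bj => match bi, bj with
    | 0, 1 => mid
    | 1, 0 => mscale (- (m / tau)) LB
    | 1, 1 => mscale (- (1 / tau)) mid
    | _, _ => mzero end)%nat.
Definition B_std (N : nat) (tau : R) : Mat :=
  blk N (fun bi bj => match bi, bj with
    | 1, 0 => mscale (1 / tau) mid
    | _, _ => mzero end)%nat.
Definition C_std (N : nat) (LG : Mat) : Mat :=
  blk N (fun bi bj => match bi, bj with
    | 0, 0 => msqrt N LG
    | _, _ => mzero end)%nat.

Definition A_dapi (N : nat) (m tau k : R) (LB LC : Mat) : Mat :=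
  blk N (fun bi bj => match bi, bj with
    | 0, 1 => mid
    | 1, 0 => mscale (- (m / tau)) LB
    | 1, 1 => mscale (- (1 / tau)) mid
    | 1, 2 => mscale (1 / tau) mid
    | 2, 1 => mscale (- (1 / k)) mid
    | 2, 2 => mscale (- (1 / k)) LC
    | _, _ => mzero end)%nat.
Definition B_dapi (N : nat) (tau : R) : Mat :=
  blk N (fun bi bj => match bi, bj with
    | 1, 0 => mscale (1 / tau) mid
    | _, _ => mzero end)%nat.
Definition C_dapi (N : nat) (LG : Mat) : Mat :=
  blk N (fun bi bj => match bi, bj with
    | 0, 0 => msqrt N LG
    | _, _ => mzero end)%nat.

From Stdlib Require Import Reals Lra Lia Arith Psatz ClassicalEpsilon FunctionalExtensionality.
From Coquelicot Require Import Coquelicot.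
Open Scope R_scope.

(* In an orthonormal eigenbasis of [L_B] both systems split into independent modes, one per
   eigenvalue [lam n], and the output energy of an impulse response is [alpha] times the sum of
   [lam n q_n(t)^2], where [q_n] is the phase coordinate of mode [n]; the zero mode does not
   contribute.  For [lam n > 0], the quadratic form [W] whose matrix solves the mode's Lyapunov
   equation satisfies [W' = - lam n q_n^2], so the energy integrated over [0, T] equals
   [W(0) - W(T)].  A Lyapunov energy estimate gives [W(T) = O(1/T)], hence the improper integral
   converges to [W(0)], which is evaluated at the impulse initial state [(0, 1/tau, 0)]. *)

Lemma rsum_ext n f g : (forall i, (i < n)%nat -> f i = g i) -> rsum n f = rsum n g.
Proof.
  induction n as [|n IH]; intros H; simpl; [reflexivity|].
  rewrite IH, H; auto.
Qed.

Lemma rsum_plus n f g : rsum n (fun i => f i + g i) = rsum n f + rsum n g.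
Proof. induction n; simpl; [lra|]. rewrite IHn; lra. Qed.

Lemma rsum_scal_l n c f : rsum n (fun i => c * f i) = c * rsum n f.
Proof. induction n; simpl; [lra|]. rewrite IHn; lra. Qed.

Lemma rsum_scal_r n c f : rsum n (fun i => f i * c) = rsum n f * c.
Proof. induction n; simpl; [lra|]. rewrite IHn; lra. Qed.

Lemma rsum_opp n f : rsum n (fun i => - f i) = - rsum n f.
Proof. induction n; simpl; [lra|]. rewrite IHn; lra. Qed.

Lemma rsum_zero n f : (forall i, (i < n)%nat -> f i = 0) -> rsum n f = 0.
Proof. induction n; intros H; simpl; [reflexivity|]. rewrite IHn, H; auto; lra. Qed.

Lemma rsum_swap n m f :
  rsum n (fun i => rsum m (fun j => f i j)) = rsum m (fun j => rsum n (fun i => f i j)).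
Proof.
  induction n; simpl.
  - symmetry; apply rsum_zero; auto.
  - rewrite IHn, <- rsum_plus; reflexivity.
Qed.

Lemma rsum_split n m f : rsum (n + m) f = rsum n f + rsum m (fun i => f (n + i)%nat).
Proof.
  induction m; simpl.
  - rewrite Nat.add_0_r; lra.
  - rewrite Nat.add_succ_r; simpl; rewrite IHm; lra.
Qed.

Lemma rsum_blocks s N f : rsum (s * N) f = rsum s (fun b => rsum N (fun m => f (b * N + m)%nat)).
Proof.
  induction s; simpl; [reflexivity|].
  replace (N + s * N)%nat with (s * N + N)%nat by lia.
  rewrite rsum_split, IHs; reflexivity.
Qed.

Lemma rsum_delta n i c : (i < n)%nat -> rsum n (fun j => if Nat.eqb j i then c else 0) = c.
Proof.
  induction n; intros Hi; [lia|]; simpl.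
  destruct (Nat.eqb_spec n i) as [->|Hne].
  - rewrite rsum_zero; [lra|]. intros j Hj. destruct (Nat.eqb_spec j i); [lia|reflexivity].
  - rewrite IHn by lia; lra.
Qed.

Lemma rsum_mid_l n i f : (i < n)%nat -> rsum n (fun j => mid i j * f j) = f i.
Proof.
  intros Hi. rewrite <- (rsum_delta n i (f i) Hi). apply rsum_ext; intros j _.
  unfold mid. destruct (Nat.eqb_spec i j), (Nat.eqb_spec j i); subst; try lia; lra.
Qed.

Lemma rsum_mid_r n i f : (i < n)%nat -> rsum n (fun j => f j * mid j i) = f i.
Proof.
  intros Hi. rewrite <- (rsum_delta n i (f i) Hi). apply rsum_ext; intros j _.
  unfold mid. destruct (Nat.eqb_spec j i); subst; lra.
Qed.

Lemma rsum_le n f g : (forall i, (i < n)%nat -> f i <= g i) -> rsum n f <= rsum n g.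
Proof.
  induction n; simpl; intros H; [lra|].
  pose proof (H n ltac:(lia)). pose proof (IHn ltac:(intros; apply H; lia)). lra.
Qed.

Lemma rsum_nonneg n f : (forall i, (i < n)%nat -> 0 <= f i) -> 0 <= rsum n f.
Proof. intros H. rewrite <- (rsum_zero n (fun _ => 0)) by auto. apply rsum_le; auto. Qed.

Lemma rsum_abs n f : Rabs (rsum n f) <= rsum n (fun i => Rabs (f i)).
Proof.
  induction n; simpl; [rewrite Rabs_R0; lra|].
  eapply Rle_trans; [apply Rabs_triang | lra].
Qed.

Lemma rsum_elem_le n f i :
  (forall j, (j < n)%nat -> 0 <= f j) -> (i < n)%nat -> f i <= rsum n f.
Proof.
  induction n; intros H Hi; [lia|]; simpl.
  destruct (Nat.eq_dec i n) as [->|].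
  - pose proof (rsum_nonneg n f ltac:(intros; apply H; lia)); lra.
  - pose proof (IHn ltac:(intros; apply H; lia) ltac:(lia)). pose proof (H n ltac:(lia)). lra.
Qed.

Lemma rsum_sqr n f : (rsum n f) ^ 2 = rsum n (fun i => rsum n (fun j => f i * f j)).
Proof.
  rewrite <- Rsqr_pow2; unfold Rsqr. rewrite <- rsum_scal_r.
  apply rsum_ext; intros. rewrite <- rsum_scal_l; reflexivity.
Qed.

Lemma rsum_indicator_const N c :
  (1 <= N)%nat -> rsum N (fun n => if Nat.eqb n 0 then 0 else c) = c * INR (N - 1).
Proof.
  intros HN; induction N as [|N IH]; [lia|].
  destruct N; [simpl; lra|].
  change (rsum (S (S N)) (fun n => if Nat.eqb n 0 then 0 else c))
    with (rsum (S N) (fun n => if Nat.eqb n 0 then 0 else c) + c).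
  rewrite IH by lia. replace (S (S N) - 1)%nat with (S (S N - 1)) by lia.
  rewrite S_INR; ring.
Qed.

Lemma is_derive_eq (f : R -> R) (t l l' : R) : is_derive f t l -> l = l' -> is_derive f t l'.
Proof. intros H <-; exact H. Qed.

Lemma is_derive_Rplus (f g : R -> R) (df dg t : R) :
  is_derive f t df -> is_derive g t dg -> is_derive (fun s => f s + g s) t (df + dg).
Proof. intros Hf Hg. apply (is_derive_plus f g t df dg Hf Hg). Qed.

Lemma is_derive_Rmult (f g : R -> R) (df dg t : R) : is_derive f t df -> is_derive g t dg ->
  is_derive (fun s => f s * g s) t (df * g t + f t * dg).
Proof. intros Hf Hg. apply (is_derive_mult f g t df dg Hf Hg Rmult_comm). Qed.

Lemma is_derive_rsum n (f : nat -> R -> R) df t :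
  (forall l, (l < n)%nat -> is_derive (f l) t (df l)) ->
  is_derive (fun s => rsum n (fun l => f l s)) t (rsum n df).
Proof.
  induction n; intros H; simpl; [apply (is_derive_const 0)|].
  apply is_derive_Rplus; [apply IHn|]; auto.
Qed.

Lemma mmul_assoc n A B C i j : mmul n A (mmul n B C) i j = mmul n (mmul n A B) C i j.
Proof.
  unfold mmul.
  rewrite (rsum_ext n _ (fun l => rsum n (fun m => A i l * B l m * C m j))).
  2:{ intros; rewrite <- rsum_scal_l; apply rsum_ext; intros; ring. }
  rewrite rsum_swap. apply rsum_ext; intros. rewrite <- rsum_scal_r; reflexivity.
Qed.

Lemma mpow_succ_r n A k i j : (i < n)%nat -> (j < n)%nat ->
  mpow n A (S k) i j = mmul n (mpow n A k) A i j.
Proof.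
  revert i j; induction k; intros i j Hi Hj.
  - simpl; unfold mmul. rewrite rsum_mid_l, rsum_mid_r by auto; reflexivity.
  - change (mpow n A (S (S k)) i j) with (mmul n A (mpow n A (S k)) i j).
    unfold mmul at 1. rewrite (rsum_ext n _ (fun l => A i l * mmul n (mpow n A k) A l j)).
    + apply mmul_assoc.
    + intros l Hl; rewrite IHk; auto.
Qed.

Lemma mpow_tr n A k i j : (i < n)%nat -> (j < n)%nat -> mpow n (mtr A) k i j = mpow n A k j i.
Proof.
  revert i j; induction k; intros i j Hi Hj.
  - simpl; unfold mid. rewrite Nat.eqb_sym; reflexivity.
  - rewrite mpow_succ_r by auto. simpl; unfold mmul, mtr.
    apply rsum_ext; intros l Hl. rewrite IHk by auto; ring.
Qed.

Definition mnorm n (A : Mat) := rsum n (fun i => rsum n (fun l => Rabs (A i l))).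

Lemma mnorm_nonneg n A : 0 <= mnorm n A.
Proof. apply rsum_nonneg; intros; apply rsum_nonneg; intros; apply Rabs_pos. Qed.

Lemma mpow_bound n A k i j : (i < n)%nat -> (j < n)%nat ->
  Rabs (mpow n A k i j) <= mnorm n A ^ k.
Proof.
  revert i j; induction k; intros i j Hi Hj; simpl.
  - unfold mid; destruct (Nat.eqb i j); rewrite ?Rabs_R1, ?Rabs_R0; lra.
  - unfold mmul. eapply Rle_trans; [apply rsum_abs|].
    apply Rle_trans with (rsum n (fun l => Rabs (A i l) * mnorm n A ^ k)).
    + apply rsum_le; intros l Hl. rewrite Rabs_mult.
      apply Rmult_le_compat_l; [apply Rabs_pos | auto].
    + rewrite rsum_scal_r. apply Rmult_le_compat_r; [apply pow_le, mnorm_nonneg|].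
      apply (rsum_elem_le n (fun i => rsum n (fun l => Rabs (A i l)))); auto.
      intros; apply rsum_nonneg; intros; apply Rabs_pos.
Qed.

Definition mexp_coef n A i j (k : nat) : R := mpow n A k i j / INR (fact k).

Lemma mexp_coef_CV_disk n A i j r : (i < n)%nat -> (j < n)%nat -> CV_disk (mexp_coef n A i j) r.
Proof.
  intros Hi Hj. unfold CV_disk.
  apply (@ex_series_le R_AbsRing R_CompleteNormedModule _
           (fun k => / INR (fact k) * (mnorm n A * Rabs r) ^ k)).
  - intros k. change norm with Rabs. rewrite Rabs_Rabsolu. unfold mexp_coef.
    change (Rabs (mpow n A k i j / INR (fact k) * r ^ k) <= / INR (fact k) * (mnorm n A * Rabs r) ^ k).
    assert (Hf : 0 < / INR (fact k)) by apply Rinv_0_lt_compat, INR_fact_lt_0.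
    unfold Rdiv. rewrite !Rabs_mult, Rpow_mult_distr, <- RPow_abs, (Rabs_right (/ _)) by lra.
    rewrite <- !Rmult_assoc. apply Rmult_le_compat_r; [apply pow_le, Rabs_pos|].
    rewrite Rmult_comm. apply Rmult_le_compat_l; [lra | apply mpow_bound; auto].
  - exists (exp (mnorm n A * Rabs r)).
    eapply is_series_ext; [|exact (is_exp_Reals (mnorm n A * Rabs r))].
    intros k; simpl. rewrite pow_n_pow. change scal with Rmult; simpl; lra.
Qed.

Lemma mexp_coef_radius n A i j t : (i < n)%nat -> (j < n)%nat ->
  Rbar_lt (Rabs t) (CV_radius (mexp_coef n A i j)).
Proof.
  intros Hi Hj. unfold CV_radius.
  destruct (Lub_Rbar_correct (CV_disk (mexp_coef n A i j))) as [Hub _].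
  specialize (Hub (Rabs t + 1) (mexp_coef_CV_disk n A i j _ Hi Hj)).
  destruct (Lub_Rbar (CV_disk (mexp_coef n A i j))); simpl in *; try tauto; lra.
Qed.

Lemma mexp_coef_partial_sums n A t i j : (i < n)%nat -> (j < n)%nat ->
  is_lim_seq (fun K => sum_f_R0 (fun k => t ^ k / INR (fact k) * mpow n A k i j) K)
             (PSeries (mexp_coef n A i j) t).
Proof.
  intros Hi Hj.
  pose proof (PSeries_correct _ _ (CV_radius_inside _ _ (mexp_coef_radius n A i j t Hi Hj))) as H.
  eapply is_lim_seq_ext; [|exact H]. intros K; simpl.
  rewrite sum_n_Reals. apply sum_eq; intros k _.
  rewrite pow_n_pow. change scal with Rmult; simpl. unfold mexp_coef, Rdiv; ring.
Qed.

Lemma mexp_PSeries n A t i j : (i < n)%nat -> (j < n)%nat ->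
  mexp n A t i j = PSeries (mexp_coef n A i j) t.
Proof.
  intros Hi Hj.
  pose proof (proj1 (is_lim_seq_Reals _ _) (mexp_coef_partial_sums n A t i j Hi Hj)) as Hcv.
  unfold mexp, lim. eapply UL_sequence; [|exact Hcv].
  exact (epsilon_spec (inhabits 0) _ (ex_intro _ _ Hcv)).
Qed.

Lemma mexp_0 n A i j : (i < n)%nat -> (j < n)%nat -> mexp n A 0 i j = mid i j.
Proof. intros Hi Hj. rewrite mexp_PSeries, PSeries_0 by auto. unfold mexp_coef; simpl; lra. Qed.

Lemma mexp_tr n A t i j : (i < n)%nat -> (j < n)%nat -> mexp n (mtr A) t i j = mexp n A t j i.
Proof.
  intros Hi Hj. unfold mexp. f_equal. apply functional_extensionality; intros K.
  apply sum_eq; intros k _. rewrite mpow_tr; auto.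
Qed.

Lemma is_lim_seq_rsum n (c : nat -> R) (u : nat -> nat -> R) (v : nat -> R) :
  (forall l, (l < n)%nat -> is_lim_seq (u l) (v l)) ->
  is_lim_seq (fun K => rsum n (fun l => c l * u l K)) (rsum n (fun l => c l * v l)).
Proof.
  induction n; intros H; simpl; [apply is_lim_seq_const|].
  apply is_lim_seq_plus'; [apply IHn; auto|].
  apply is_lim_seq_mult'; [apply is_lim_seq_const | auto].
Qed.

Lemma sum_f_R0_rsum K n (f : nat -> nat -> R) :
  sum_f_R0 (fun k => rsum n (fun l => f k l)) K = rsum n (fun l => sum_f_R0 (fun k => f k l) K).
Proof. induction K; simpl; [reflexivity|]. rewrite IHK, <- rsum_plus; reflexivity. Qed.

Lemma PS_derive_mexp_coef n A i j k :
  PS_derive (mexp_coef n A i j) k = rsum n (fun l => A i l * mexp_coef n A l j k).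
Proof.
  unfold PS_derive, mexp_coef. change (mpow n A (S k) i j) with (mmul n A (mpow n A k) i j).
  unfold mmul, Rdiv. rewrite <- rsum_scal_r, <- rsum_scal_l.
  change (fact (S k)) with (S k * fact k)%nat. rewrite mult_INR.
  assert (INR (fact k) <> 0) by apply not_0_INR, fact_neq_0.
  assert (INR (S k) <> 0) by (apply not_0_INR; lia).
  apply rsum_ext; intros l Hl. field; auto.
Qed.

Lemma mexp_deriv n A t i j : (i < n)%nat -> (j < n)%nat ->
  is_derive (fun s => mexp n A s i j) t (rsum n (fun l => A i l * mexp n A t l j)).
Proof.
  intros Hi Hj.
  apply (is_derive_ext (PSeries (mexp_coef n A i j))); [intros; rewrite mexp_PSeries; auto|].
  replace (rsum n (fun l => A i l * mexp n A t l j))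
    with (PSeries (PS_derive (mexp_coef n A i j)) t).
  { apply is_derive_PSeries, mexp_coef_radius; auto. }
  apply is_pseries_unique.
  rewrite (rsum_ext n _ (fun l => A i l * PSeries (mexp_coef n A l j) t))
    by (intros; rewrite mexp_PSeries; auto).
  eapply (is_lim_seq_ext _ _ (rsum n (fun l => A i l * PSeries (mexp_coef n A l j) t)));
    [|apply (is_lim_seq_rsum n (A i) _ _ (fun l Hl => mexp_coef_partial_sums n A t l j Hl Hj))].
  intros K. simpl. rewrite sum_n_Reals.
  rewrite (rsum_ext n _ (fun l => sum_f_R0 (fun k => A i l * (t ^ k / INR (fact k) * mpow n A k l j)) K))
    by (intros; rewrite scal_sum; apply sum_eq; intros; ring).
  rewrite <- sum_f_R0_rsum. apply sum_eq; intros k _.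
  change (rsum n (fun l => A i l * (t ^ k / INR (fact k) * mpow n A k l j))
          = pow_n t k * PS_derive (mexp_coef n A i j) k).
  replace (pow_n t k) with (t ^ k) by (symmetry; apply pow_n_pow).
  rewrite PS_derive_mexp_coef, <- rsum_scal_l.
  apply rsum_ext; intros l _. unfold mexp_coef, Rdiv; ring.
Qed.

Definition impulse_response n A B (r : nat) t i := rsum n (fun l => mexp n A t i l * B l r).

Lemma impulse_response_deriv n A B r t i : (i < n)%nat ->
  is_derive (fun s => impulse_response n A B r s i) t
            (rsum n (fun l => A i l * impulse_response n A B r t l)).
Proof.
  intros Hi. unfold impulse_response.
  replace (rsum n (fun l => A i l * rsum n (fun l' => mexp n A t l l' * B l' r)))
    with (rsum n (fun l => B l r * rsum n (fun k => A i k * mexp n A t k l))).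
  - apply is_derive_rsum. intros l Hl.
    apply (is_derive_ext (fun s => B l r * mexp n A s i l)); [intros; apply Rmult_comm|].
    apply is_derive_scal, mexp_deriv; auto.
  - rewrite (rsum_ext n (fun l => A i l * _) (fun l => rsum n (fun l' => A i l * mexp n A t l l' * B l' r)))
      by (intros; rewrite <- rsum_scal_l; apply rsum_ext; intros; ring).
    rewrite rsum_swap. apply rsum_ext; intros. rewrite <- rsum_scal_l. apply rsum_ext; intros; ring.
Qed.

Lemma impulse_response_0 n A B r i : (i < n)%nat -> impulse_response n A B r 0 i = B i r.
Proof.
  intros Hi. unfold impulse_response.
  rewrite (rsum_ext n _ (fun l => mid i l * B l r)) by (intros; rewrite mexp_0; auto).
  apply (rsum_mid_l n i (fun l => B l r)); auto.
Qed.

Lemma H2_integrand_impulse n p A B C t :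
  trace p (mmul n (mmul p (mmul n (mmul n C (mexp n A t)) B) (mtr B)) (mmul n (mexp n (mtr A) t) (mtr C)))
  = rsum p (fun i => rsum p (fun r => (rsum n (fun l => C i l * impulse_response n A B r t l)) ^ 2)).
Proof.
  unfold trace. apply rsum_ext; intros i Hi.
  set (y := fun r => rsum n (fun l => C i l * impulse_response n A B r t l)).
  assert (Hy : forall r, mmul n (mmul n C (mexp n A t)) B i r = y r).
  { intros r. unfold mmul, y, impulse_response.
    rewrite (rsum_ext n (fun l => C i l * _) (fun l => rsum n (fun l' => C i l * mexp n A t l l' * B l' r)))
      by (intros; rewrite <- rsum_scal_l; apply rsum_ext; intros; ring).
    rewrite rsum_swap. apply rsum_ext; intros. rewrite <- rsum_scal_r; reflexivity. }
  assert (Hy' : forall r, y r = rsum n (fun l => B l r * rsum n (fun l' => mexp n A t l' l * C i l'))).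
  { intros r. unfold y, impulse_response.
    rewrite (rsum_ext n (fun l => C i l * _) (fun l => rsum n (fun l' => B l' r * (mexp n A t l l' * C i l))))
      by (intros; rewrite <- rsum_scal_l; apply rsum_ext; intros; ring).
    rewrite rsum_swap. apply rsum_ext; intros. rewrite <- rsum_scal_l; reflexivity. }
  unfold mmul at 1 2.
  rewrite (rsum_ext n _ (fun l => rsum p (fun r => y r * (B l r * rsum n (fun l' => mexp n A t l' l * C i l'))))).
  2:{ intros l Hl. unfold mtr at 1. rewrite <- rsum_scal_r. apply rsum_ext; intros r Hr.
      rewrite Hy. unfold mmul. rewrite Rmult_assoc. f_equal. f_equal.
      apply rsum_ext; intros l' Hl'. rewrite mexp_tr by auto. unfold mtr; ring. }
  rewrite rsum_swap. apply rsum_ext; intros r Hr.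
  rewrite rsum_scal_l, <- Hy'. unfold y; ring.
Qed.

Section Spectral.

Variables (N : nat) (U : Mat) (lam : nat -> R) (L : Mat).
Hypothesis HU : meq N N (mmul N (mtr U) U) mid.
Hypothesis HL : meq N N L (mmul N (mmul N U (mdiag lam)) (mtr U)).

Lemma eigen_entry i j : (i < N)%nat -> (j < N)%nat ->
  L i j = rsum N (fun k => U i k * lam k * U j k).
Proof.
  intros Hi Hj. rewrite HL by auto. unfold mmul, mtr. apply rsum_ext; intros k Hk. f_equal.
  rewrite <- (rsum_delta N k (U i k * lam k) Hk). apply rsum_ext; intros l Hl.
  unfold mdiag. destruct (Nat.eqb_spec l k); subst; ring.
Qed.

Lemma cols_orthonormal k n : (k < N)%nat -> (n < N)%nat ->
  rsum N (fun m => U m k * U m n) = mid k n.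
Proof. intros Hk Hn. exact (HU k n Hk Hn). Qed.

Lemma eigen_coord_mul n y : (n < N)%nat ->
  rsum N (fun m => U m n * rsum N (fun l => L m l * y l)) = lam n * rsum N (fun l => U l n * y l).
Proof.
  intros Hn.
  rewrite (rsum_ext N _ (fun m => rsum N (fun l => rsum N (fun k => y l * lam k * U l k * (U m k * U m n))))).
  2:{ intros m Hm. rewrite <- rsum_scal_l. apply rsum_ext; intros l Hl.
      rewrite eigen_entry, <- rsum_scal_r, <- rsum_scal_l by auto. apply rsum_ext; intros; ring. }
  rewrite rsum_swap, <- rsum_scal_l. apply rsum_ext; intros l Hl.
  rewrite rsum_swap.
  rewrite (rsum_ext N _ (fun k => y l * lam k * U l k * mid k n))
    by (intros; rewrite rsum_scal_l, cols_orthonormal; auto).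
  rewrite (rsum_mid_r N n (fun k => y l * lam k * U l k)) by auto. ring.
Qed.

Lemma rsum_cols_sqr (c : nat -> R) :
  rsum N (fun r => rsum N (fun n => c n * (U r n * U r n))) = rsum N c.
Proof.
  rewrite rsum_swap. apply rsum_ext; intros n Hn.
  rewrite rsum_scal_l, cols_orthonormal by auto. unfold mid. rewrite Nat.eqb_refl. ring.
Qed.

Lemma msqrt_scale_spec alpha : 0 <= alpha -> (forall k, (k < N)%nat -> 0 <= lam k) ->
  mpsd N (msqrt N (mscale alpha L)) /\
  meq N N (mmul N (msqrt N (mscale alpha L)) (msqrt N (mscale alpha L))) (mscale alpha L).
Proof.
  intros Ha Hlam. unfold msqrt.
  apply (epsilon_spec (inhabits mzero) (fun S => mpsd N S /\ meq N N (mmul N S S) (mscale alpha L))).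
  set (s := fun k => sqrt (alpha * lam k)).
  assert (Hs : forall k, (k < N)%nat -> s k * s k = alpha * lam k).
  { intros k Hk. apply sqrt_sqrt, Rmult_le_pos; auto. }
  exists (fun i j => rsum N (fun k => U i k * s k * U j k)). split; [split|].
  - intros i j Hi Hj. unfold mtr. apply rsum_ext; intros; ring.
  - intros x.
    rewrite (rsum_ext N _ (fun i => rsum N (fun k => rsum N (fun j => s k * (U i k * x i) * (U j k * x j))))).
    2:{ intros i Hi. rewrite <- rsum_swap. apply rsum_ext; intros j Hj.
        rewrite <- rsum_scal_l, <- rsum_scal_r. apply rsum_ext; intros; ring. }
    rewrite rsum_swap. apply rsum_nonneg; intros k Hk.
    rewrite (rsum_ext N _ (fun i => s k * rsum N (fun j => (U i k * x i) * (U j k * x j))))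
      by (intros; rewrite <- rsum_scal_l; apply rsum_ext; intros; ring).
    rewrite rsum_scal_l, <- rsum_sqr. apply Rmult_le_pos; [apply sqrt_pos | apply pow2_ge_0].
  - intros i j Hi Hj. unfold mmul, mscale.
    rewrite eigen_entry, <- rsum_scal_l by auto.
    rewrite (rsum_ext N _ (fun l => rsum N (fun k => rsum N (fun k' =>
               U i k * s k * U j k' * s k' * (U l k * U l k'))))).
    2:{ intros l Hl. rewrite <- rsum_scal_r. apply rsum_ext; intros k Hk.
        rewrite <- !rsum_scal_l. apply rsum_ext; intros; ring. }
    rewrite rsum_swap. apply rsum_ext; intros k Hk. rewrite rsum_swap.
    rewrite (rsum_ext N _ (fun k' => mid k k' * (U i k * s k * U j k' * s k')))
      by (intros; rewrite rsum_scal_l, cols_orthonormal; auto; ring).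
    rewrite (rsum_mid_l N k (fun k' => U i k * s k * U j k' * s k')) by auto.
    replace (alpha * (U i k * lam k * U j k)) with (U i k * U j k * (alpha * lam k)) by ring.
    rewrite <- Hs by auto. ring.
Qed.

Lemma quad_form_msqrt S alpha x : msym N S -> meq N N (mmul N S S) (mscale alpha L) ->
  rsum N (fun i => (rsum N (fun m => S i m * x m)) ^ 2)
  = alpha * rsum N (fun n => lam n * (rsum N (fun m => U m n * x m)) ^ 2).
Proof.
  intros HS HSS.
  rewrite (rsum_ext N _ (fun i => rsum N (fun m => rsum N (fun l => x m * x l * (S m i * S i l))))).
  2:{ intros i Hi. rewrite rsum_sqr. apply rsum_ext; intros m Hm. apply rsum_ext; intros l Hl.
      rewrite (HS i m) by auto. unfold mtr; ring. }
  rewrite rsum_swap.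
  rewrite (rsum_ext N _ (fun m => rsum N (fun l => x m * x l * (alpha * L m l)))).
  2:{ intros m Hm. rewrite rsum_swap. apply rsum_ext; intros l Hl.
      rewrite rsum_scal_l. f_equal. exact (HSS m l Hm Hl). }
  rewrite <- rsum_scal_l. symmetry.
  rewrite (rsum_ext N _ (fun n => rsum N (fun m => rsum N (fun l =>
             alpha * (lam n * (U m n * x m) * (U l n * x l)))))).
  2:{ intros n Hn. rewrite rsum_sqr, <- !rsum_scal_l. apply rsum_ext; intros m Hm.
      rewrite <- !rsum_scal_l. apply rsum_ext; intros; ring. }
  rewrite rsum_swap. apply rsum_ext; intros m Hm. rewrite rsum_swap. apply rsum_ext; intros l Hl.
  rewrite eigen_entry, <- !rsum_scal_l by auto. apply rsum_ext; intros; ring.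
Qed.

End Spectral.

Lemma nonincreasing_of_deriv_nonpos (f df : R -> R) :
  (forall t, is_derive f t (df t)) -> (forall t, 0 <= t -> df t <= 0) ->
  forall t, 0 <= t -> f t <= f 0.
Proof.
  intros Hd Hn t Ht. destruct (Req_dec t 0) as [->|Hne]; [lra|].
  destruct (MVT_cor3 f df 0 t ltac:(lra)) as [c [H1 [_ ->]]].
  { intros x _ _. apply is_derive_Reals, Hd. }
  pose proof (Hn c H1). nra.
Qed.

(* [Phi + kap t E] is nonincreasing on [t >= 0]. *)
Lemma lyapunov_inverse_time_decay (E Phi dE dPhi : R -> R) (kap : R) :
  0 < kap ->
  (forall t, is_derive E t (dE t)) -> (forall t, is_derive Phi t (dPhi t)) ->
  (forall t, dE t <= 0) -> (forall t, dPhi t <= - kap * E t) -> (forall t, 0 <= Phi t) ->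
  exists K, forall t, 0 < t -> E t <= K / t.
Proof.
  intros Hk HE HP HdE HdP HP0. exists (Phi 0 / kap). intros t Ht.
  set (psi := fun s => Phi s + kap * (s * E s)).
  assert (Hpsi : psi t <= psi 0).
  { apply (nonincreasing_of_deriv_nonpos psi (fun s => dPhi s + kap * (1 * E s + s * dE s))); [| |lra].
    - intros s. apply is_derive_Rplus, is_derive_scal, is_derive_Rmult; auto. apply (is_derive_id s).
    - intros s Hs. pose proof (HdP s). pose proof (HdE s).
      assert (0 <= kap * (s * - dE s)) by (apply Rmult_le_pos; [|apply Rmult_le_pos]; lra). lra. }
  unfold psi in Hpsi. pose proof (HP0 t).
  apply (Rmult_le_reg_r (kap * t)); [nra|].
  replace (Phi 0 / kap / t * (kap * t)) with (Phi 0) by (field; lra). nra.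
Qed.

Lemma inverse_time_decay_le (f g : R -> R) (c : R) : 0 <= c -> (forall t, f t <= c * g t) ->
  (exists K, forall t, 0 < t -> g t <= K / t) -> exists K, forall t, 0 < t -> f t <= K / t.
Proof.
  intros Hc Hfg [K HK]. exists (c * K). intros t Ht.
  eapply Rle_trans; [apply Hfg|]. unfold Rdiv. rewrite Rmult_assoc.
  apply Rmult_le_compat_l; [lra | apply HK; auto].
Qed.

Lemma binary_form_nonneg a b c x y : 0 < a -> b ^ 2 <= 4 * a * c ->
  0 <= a * x ^ 2 + b * x * y + c * y ^ 2.
Proof.
  intros Ha Hb.
  assert (H : 4 * a * (a * x ^ 2 + b * x * y + c * y ^ 2)
              = (2 * a * x + b * y) ^ 2 + (4 * a * c - b ^ 2) * y ^ 2) by ring.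
  assert (0 <= (2 * a * x + b * y) ^ 2 + (4 * a * c - b ^ 2) * y ^ 2).
  { pose proof (pow2_ge_0 (2 * a * x + b * y)). pose proof (pow2_ge_0 y). nra. }
  nra.
Qed.

Lemma sqr_le_weighted a x : 0 < a -> x ^ 2 <= / a * (a * x ^ 2).
Proof. intros Ha. right. field. lra. Qed.

Lemma le_mul_of_div_le p b M : 0 < p -> b / p <= M -> b <= p * M.
Proof.
  intros Hp H. apply (Rmult_le_compat_l p) in H; [|lra].
  replace (p * (b / p)) with b in H by (field; lra). exact H.
Qed.

Lemma lyapunov_weight_exists a c w g : 0 < a -> 0 < c -> 0 < w -> 0 < g ->
  exists M, 1 <= M /\ 1 <= a * M /\ c ^ 2 + 3 * a <= a * c * M /\ c ^ 2 + a * w <= a * w * g * M.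
Proof.
  intros Ha Hc Hw Hg.
  assert (Hawg : 0 < a * w * g) by (repeat apply Rmult_lt_0_compat; lra).
  assert (H1 : 0 < 1 / a) by (apply Rdiv_lt_0_compat; lra).
  assert (H2 : 0 < (c ^ 2 + 3 * a) / (a * c)) by (apply Rdiv_lt_0_compat; nra).
  assert (H3 : 0 < (c ^ 2 + a * w) / (a * w * g)) by (apply Rdiv_lt_0_compat; nra).
  exists (1 + 1 / a + (c ^ 2 + 3 * a) / (a * c) + (c ^ 2 + a * w) / (a * w * g)).
  split; [lra|]. split; [apply le_mul_of_div_le; lra|].
  split; [apply le_mul_of_div_le; [apply Rmult_lt_0_compat | ]; lra|].
  apply le_mul_of_div_le; lra.
Qed.

Lemma std_mode_decay (a c : R) (q p : R -> R) : 0 < a -> 0 < c ->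
  (forall t, is_derive q t (p t)) -> (forall t, is_derive p t (- a * q t - c * p t)) ->
  exists K, forall t, 0 < t -> q t ^ 2 + p t ^ 2 <= K / t.
Proof.
  intros Ha Hc Hq Hp.
  destruct (lyapunov_weight_exists a c 1 1 Ha Hc ltac:(lra) ltac:(lra)) as (M & HM1 & HM2 & HM3 & _).
  set (E := fun s => a * q s ^ 2 + p s ^ 2).
  assert (HE : forall t, is_derive E t (- 2 * c * p t ^ 2)).
  { intros t. eapply is_derive_eq.
    - apply is_derive_Rplus; [apply is_derive_scal|]; apply is_derive_pow; auto.
    - simpl; ring. }
  apply (inverse_time_decay_le _ E (/ a + 1)).
  { assert (0 < / a) by (apply Rinv_0_lt_compat; lra). lra. }
  { intros t. pose proof (sqr_le_weighted a (q t) Ha). unfold E.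
    assert (0 <= / a * p t ^ 2) by (apply Rmult_le_pos; [apply Rlt_le, Rinv_0_lt_compat; lra | apply pow2_ge_0]).
    assert (0 <= a * q t ^ 2) by (apply Rmult_le_pos; [lra | apply pow2_ge_0]). lra. }
  apply (lyapunov_inverse_time_decay E (fun s => M * E s + q s * p s) (fun t => - 2 * c * p t ^ 2)
           (fun t => M * (- 2 * c * p t ^ 2) + (p t ^ 2 + q t * (- a * q t - c * p t))) (1 / 2));
    [lra | exact HE | | | |].
  - intros t. eapply is_derive_eq.
    + apply is_derive_Rplus; [apply is_derive_scal, HE | apply is_derive_Rmult; auto].
    + simpl; ring.
  - intros t. pose proof (pow2_ge_0 (p t)). nra.
  - intros t. unfold E.
    pose proof (binary_form_nonneg (a / 2) c (2 * c * M - 3 / 2) (q t) (p t) ltac:(lra) ltac:(nra)).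
    nra.
  - intros t. unfold E.
    pose proof (binary_form_nonneg (M * a) 1 M (q t) (p t) ltac:(nra) ltac:(nra)). nra.
Qed.

Lemma dapi_mode_decay (a c d g : R) (q p r : R -> R) : 0 < a -> 0 < c -> 0 < d -> 0 < g ->
  (forall t, is_derive q t (p t)) -> (forall t, is_derive p t (- a * q t - c * p t + c * r t)) ->
  (forall t, is_derive r t (- d * p t - g * r t)) ->
  exists K, forall t, 0 < t -> q t ^ 2 + p t ^ 2 + r t ^ 2 <= K / t.
Proof.
  intros Ha Hc Hd Hg Hq Hp Hr.
  set (w := c / d). assert (Hw : 0 < w) by (apply Rdiv_lt_0_compat; lra).
  destruct (lyapunov_weight_exists a c w g Ha Hc Hw Hg) as (M & HM1 & HM2 & HM3 & HM4).
  assert (0 < / a) by (apply Rinv_0_lt_compat; lra). assert (0 < / w) by (apply Rinv_0_lt_compat; lra).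
  set (E := fun s => a * q s ^ 2 + p s ^ 2 + w * r s ^ 2).
  assert (HE : forall t, is_derive E t (- 2 * c * p t ^ 2 - 2 * w * g * r t ^ 2)).
  { intros t. eapply is_derive_eq.
    - apply is_derive_Rplus; [apply is_derive_Rplus; [apply is_derive_scal|] | apply is_derive_scal];
        apply is_derive_pow; auto.
    - simpl; unfold w; field; lra. }
  apply (inverse_time_decay_le _ E (/ a + 1 + / w)); [lra| |].
  { intros t. pose proof (sqr_le_weighted a (q t) Ha). pose proof (sqr_le_weighted w (r t) Hw).
    pose proof (pow2_ge_0 (q t)). pose proof (pow2_ge_0 (p t)). pose proof (pow2_ge_0 (r t)).
    assert (0 <= / a * (p t ^ 2 + w * r t ^ 2)) by (apply Rmult_le_pos; nra).
    assert (0 <= / w * (a * q t ^ 2 + p t ^ 2)) by (apply Rmult_le_pos; nra).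
    assert (0 <= a * q t ^ 2 + w * r t ^ 2) by nra.
    unfold E. nra. }
  apply (lyapunov_inverse_time_decay E (fun s => M * E s + q s * p s)
           (fun t => - 2 * c * p t ^ 2 - 2 * w * g * r t ^ 2)
           (fun t => M * (- 2 * c * p t ^ 2 - 2 * w * g * r t ^ 2)
                     + (p t ^ 2 + q t * (- a * q t - c * p t + c * r t))) (1 / 2));
    [lra | exact HE | | | |].
  - intros t. eapply is_derive_eq.
    + apply is_derive_Rplus; [apply is_derive_scal, HE | apply is_derive_Rmult; auto].
    + simpl; ring.
  - intros t. pose proof (pow2_ge_0 (p t)). pose proof (pow2_ge_0 (r t)).
    assert (0 <= w * g * r t ^ 2) by (apply Rmult_le_pos; nra). nra.
  - intros t. unfold E.
    pose proof (binary_form_nonneg (a / 4) c (2 * c * M - 3 / 2) (q t) (p t) ltac:(lra) ltac:(nra)).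
    pose proof (binary_form_nonneg (a / 4) (- c) (2 * w * g * M - w / 2) (q t) (r t) ltac:(lra) ltac:(nra)).
    nra.
  - intros t. unfold E.
    pose proof (binary_form_nonneg (M * a) 1 M (q t) (p t) ltac:(nra) ltac:(nra)).
    assert (0 <= M * (w * r t ^ 2)) by (apply Rmult_le_pos; [lra | apply Rmult_le_pos; [lra | apply pow2_ge_0]]).
    nra.
Qed.

Definition quad3 v11 v12 v13 v22 v23 v33 (x y z : R) :=
  v11 * x ^ 2 + 2 * v12 * x * y + 2 * v13 * x * z + v22 * y ^ 2 + 2 * v23 * y * z + v33 * z ^ 2.

Lemma quad3_deriv v11 v12 v13 v22 v23 v33 (q p r : R -> R) dq dp dr t :
  is_derive q t dq -> is_derive p t dp -> is_derive r t dr ->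
  is_derive (fun s => quad3 v11 v12 v13 v22 v23 v33 (q s) (p s) (r s)) t
    (2 * (v11 * q t * dq + v12 * (dq * p t + q t * dp) + v13 * (dq * r t + q t * dr)
          + v22 * p t * dp + v23 * (dp * r t + p t * dr) + v33 * r t * dr)).
Proof.
  intros Hq Hp Hr.
  assert (Hsq : forall v (f : R -> R) df, is_derive f t df ->
                  is_derive (fun s => v * f s ^ 2) t (v * (INR 2 * df * f t ^ 1))).
  { intros v f df Hf. apply is_derive_scal, is_derive_pow, Hf. }
  assert (Hcross : forall v (f g : R -> R) df dg, is_derive f t df -> is_derive g t dg ->
                     is_derive (fun s => 2 * v * f s * g s) t (2 * v * (df * g t + f t * dg))).
  { intros v f g df dg Hf Hg.
    apply (is_derive_ext (fun s => 2 * v * (f s * g s))); [intros; symmetry; apply Rmult_assoc|].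
    apply is_derive_scal, is_derive_Rmult; auto. }
  unfold quad3. eapply is_derive_eq.
  - apply is_derive_Rplus; [|apply Hsq, Hr].
    apply is_derive_Rplus; [|apply Hcross; [apply Hp | apply Hr]].
    apply is_derive_Rplus; [|apply Hsq, Hp].
    apply is_derive_Rplus; [|apply Hcross; [apply Hq | apply Hr]].
    apply is_derive_Rplus; [apply Hsq, Hq | apply Hcross; [apply Hq | apply Hp]].
  - simpl; ring.
Qed.

Lemma two_abs_mul_le x y : 2 * Rabs (x * y) <= x ^ 2 + y ^ 2.
Proof.
  rewrite Rabs_mult, <- (pow2_abs x), <- (pow2_abs y).
  pose proof (pow2_ge_0 (Rabs x - Rabs y)). nra.
Qed.

Lemma quad3_abs_le v11 v12 v13 v22 v23 v33 x y z :
  Rabs (quad3 v11 v12 v13 v22 v23 v33 x y z) <=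
  (Rabs v11 + Rabs v12 + Rabs v13 + Rabs v22 + Rabs v23 + Rabs v33) * (x ^ 2 + y ^ 2 + z ^ 2).
Proof.
  assert (Hsq : forall v u, Rabs (v * u ^ 2) = Rabs v * u ^ 2).
  { intros v u. rewrite Rabs_mult, (Rabs_right (u ^ 2)); [reflexivity | apply Rle_ge, pow2_ge_0]. }
  assert (Hcross : forall v u u', Rabs (2 * v * u * u') <= Rabs v * (u ^ 2 + u' ^ 2)).
  { intros v u u'. replace (2 * v * u * u') with (v * (2 * (u * u'))) by ring.
    rewrite Rabs_mult, Rabs_mult, (Rabs_right 2) by lra.
    apply Rmult_le_compat_l; [apply Rabs_pos | apply two_abs_mul_le]. }
  pose proof (Hcross v12 x y). pose proof (Hcross v13 x z). pose proof (Hcross v23 y z).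
  pose proof (Hsq v11 x). pose proof (Hsq v22 y). pose proof (Hsq v33 z).
  assert (0 <= Rabs v11 * (y ^ 2 + z ^ 2)) by (apply Rmult_le_pos; [apply Rabs_pos | nra]).
  assert (0 <= Rabs v12 * z ^ 2) by (apply Rmult_le_pos; [apply Rabs_pos | nra]).
  assert (0 <= Rabs v13 * y ^ 2) by (apply Rmult_le_pos; [apply Rabs_pos | nra]).
  assert (0 <= Rabs v22 * (x ^ 2 + z ^ 2)) by (apply Rmult_le_pos; [apply Rabs_pos | nra]).
  assert (0 <= Rabs v23 * x ^ 2) by (apply Rmult_le_pos; [apply Rabs_pos | nra]).
  assert (0 <= Rabs v33 * (x ^ 2 + y ^ 2)) by (apply Rmult_le_pos; [apply Rabs_pos | nra]).
  unfold quad3.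
  set (t1 := v11 * x ^ 2) in *. set (t2 := 2 * v12 * x * y) in *. set (t3 := 2 * v13 * x * z) in *.
  set (t4 := v22 * y ^ 2) in *. set (t5 := 2 * v23 * y * z) in *. set (t6 := v33 * z ^ 2) in *.
  pose proof (Rabs_triang (t1 + t2 + t3 + t4 + t5) t6). pose proof (Rabs_triang (t1 + t2 + t3 + t4) t5).
  pose proof (Rabs_triang (t1 + t2 + t3) t4). pose proof (Rabs_triang (t1 + t2) t3).
  pose proof (Rabs_triang t1 t2).
  lra.
Qed.

Lemma quad3_inverse_time_decay v11 v12 v13 v22 v23 v33 (q p r : R -> R) :
  (exists K, forall t, 0 < t -> q t ^ 2 + p t ^ 2 + r t ^ 2 <= K / t) ->
  exists K, forall t, 0 < t -> Rabs (quad3 v11 v12 v13 v22 v23 v33 (q t) (p t) (r t)) <= K / t.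
Proof.
  apply (inverse_time_decay_le _ _ (Rabs v11 + Rabs v12 + Rabs v13 + Rabs v22 + Rabs v23 + Rabs v33));
    [|intros; apply quad3_abs_le].
  pose proof (Rabs_pos v11). pose proof (Rabs_pos v12). pose proof (Rabs_pos v13).
  pose proof (Rabs_pos v22). pose proof (Rabs_pos v23). pose proof (Rabs_pos v33). lra.
Qed.

(* The coefficient matrix [P] of [std_lyap] and [dapi_lyap] solves the Lyapunov equation
   [A^T P + P A = - l e1 e1^T] of the mode, so the form decreases at rate [l q^2]. *)
Definition std_lyap a c l x y :=
  quad3 (c * l / (2 * a) + l / (2 * c)) (l / (2 * a)) 0 (l / (2 * a * c)) 0 0 x y 0.

Definition dapi_lyap a c d g l x y z :=
  let v12 := l / (2 * a) in
  let v23 := v12 * (c + g) / (a + g * d + g * (c + g) + d * c) in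
  let v22 := (v12 - d * v23) / c in
  let v13 := (c * v12 - a * v23) / g in
  quad3 (c * v12 + d * v13 + a * v22) v12 v13 v22 v23 (c * v23 / g) x y z.

Section StdMode.

Variables (a c l : R) (q p : R -> R).
Hypotheses (Ha : 0 < a) (Hc : 0 < c).
Hypothesis Hq : forall t, is_derive q t (p t).
Hypothesis Hp : forall t, is_derive p t (- a * q t - c * p t).

Lemma std_lyap_deriv t : is_derive (fun s => std_lyap a c l (q s) (p s)) t (- l * q t ^ 2).
Proof.
  unfold std_lyap. eapply is_derive_eq.
  - apply (quad3_deriv _ _ _ _ _ _ q p (fun _ => 0)); [apply Hq | apply Hp | apply (is_derive_const 0)].
  - field; lra.
Qed.

Lemma std_lyap_decay : exists K, forall t, 0 < t -> Rabs (std_lyap a c l (q t) (p t)) <= K / t.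
Proof.
  apply (quad3_inverse_time_decay _ _ _ _ _ _ q p (fun _ => 0)).
  destruct (std_mode_decay a c q p Ha Hc Hq Hp) as [K HK].
  exists K. intros t Ht. rewrite pow_i, Rplus_0_r by lia. auto.
Qed.

End StdMode.

Section DapiMode.

Variables (a c d g l : R) (q p r : R -> R).
Hypotheses (Ha : 0 < a) (Hc : 0 < c) (Hd : 0 < d) (Hg : 0 < g).
Hypothesis Hq : forall t, is_derive q t (p t).
Hypothesis Hp : forall t, is_derive p t (- a * q t - c * p t + c * r t).
Hypothesis Hr : forall t, is_derive r t (- d * p t - g * r t).

Lemma dapi_lyap_deriv t :
  is_derive (fun s => dapi_lyap a c d g l (q s) (p s) (r s)) t (- l * q t ^ 2).
Proof.
  unfold dapi_lyap; cbv zeta. eapply is_derive_eq.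
  - apply quad3_deriv; [apply Hq | apply Hp | apply Hr].
  - assert (a + g * d + g * (c + g) + d * c <> 0) by nra.
    field; repeat split; lra.
Qed.

Lemma dapi_lyap_decay :
  exists K, forall t, 0 < t -> Rabs (dapi_lyap a c d g l (q t) (p t) (r t)) <= K / t.
Proof. apply quad3_inverse_time_decay, (dapi_mode_decay a c d g); auto. Qed.

End DapiMode.

Lemma improper_int_of_antiderivative (F G : R -> R) :
  (forall t, is_derive G t (- F t)) -> (forall t, ex_derive F t) ->
  (exists K, forall t, 0 < t -> Rabs (G t) <= K / t) ->
  improper_int_0_inf F (G 0).
Proof.
  intros HG HF [K HK].
  assert (HI : forall T, is_RInt F 0 T (G 0 - G T)).
  { intros T. replace (G 0 - G T) with (minus (- G T) (- G 0))
      by (unfold minus, plus, opp; simpl; ring).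
    apply (is_RInt_derive (fun s => - G s) F).
    - intros x _. eapply is_derive_eq; [apply (is_derive_opp G x _ (HG x)) | apply Ropp_involutive].
    - intros x _. apply (@ex_derive_continuous R_AbsRing R_NormedModule), HF. }
  split.
  - intros T _. exists (ex_RInt_Reals_0 F 0 T (ex_intro _ _ (HI T))). exact I.
  - intros eps Heps. exists (Rabs K / eps + 1). intros T pr HT.
    assert (0 <= Rabs K / eps) by (apply Rdiv_le_0_compat; [apply Rabs_pos | lra]).
    rewrite <- RInt_Reals, (is_RInt_unique _ _ _ _ (HI T)).
    replace (G 0 - G T - G 0) with (- G T) by ring. rewrite Rabs_Ropp.
    apply (Rle_lt_trans _ (Rabs K / T)).
    + eapply Rle_trans; [apply HK; lra|]. apply Rmult_le_compat_r; [| apply Rle_abs].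
      apply Rlt_le, Rinv_0_lt_compat; lra.
    + apply (Rmult_lt_reg_r (T / eps)); [apply Rdiv_lt_0_compat; lra|].
      replace (Rabs K / T * (T / eps)) with (Rabs K / eps) by (field; lra).
      replace (eps * (T / eps)) with T by (field; lra). lra.
Qed.

Lemma blk_entry N F b1 b2 i j : (i < N)%nat -> (j < N)%nat ->
  blk N F (b1 * N + i)%nat (b2 * N + j)%nat = F b1 b2 i j.
Proof.
  intros Hi Hj. unfold blk.
  rewrite <- (Nat.div_unique (b1 * N + i) N b1 i), <- (Nat.mod_unique (b1 * N + i) N b1 i),
          <- (Nat.div_unique (b2 * N + j) N b2 j), <- (Nat.mod_unique (b2 * N + j) N b2 j) by lia.
  reflexivity.
Qed.

Lemma blk_entry_row0 N F b i j : (i < N)%nat -> (j < N)%nat ->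
  blk N F i (b * N + j)%nat = F 0%nat b i j.
Proof. exact (blk_entry N F 0 b i j). Qed.

(* Coordinate [k], in the eigenbasis [U], of block [b] of the impulse response to input [r]. *)
Definition modal_coord n A B U N (r b k : nat) t :=
  rsum N (fun m => U m k * impulse_response n A B r t (b * N + m)%nat).

Lemma modal_coord_deriv s N FA B U r b k t : (b < s)%nat ->
  is_derive (fun u => modal_coord (s * N) (blk N FA) B U N r b k u) t
    (rsum N (fun m => U m k * rsum s (fun b' => rsum N (fun j =>
       FA b b' m j * impulse_response (s * N) (blk N FA) B r t (b' * N + j)%nat)))).
Proof.
  intros Hb. unfold modal_coord. apply is_derive_rsum; intros m Hm.
  eapply is_derive_eq; [apply is_derive_scal, impulse_response_deriv; nia|].
  rewrite rsum_blocks. f_equal. apply rsum_ext; intros b' Hb'. apply rsum_ext; intros j Hj.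
  rewrite blk_entry; auto.
Qed.

Lemma modal_coord_0 s N A FB U r b k : (b < s)%nat -> (r < N)%nat ->
  modal_coord (s * N) A (blk N FB) U N r b k 0 = rsum N (fun m => U m k * FB b 0%nat m r).
Proof.
  intros Hb Hr. unfold modal_coord. apply rsum_ext; intros m Hm.
  rewrite impulse_response_0 by nia. rewrite <- (blk_entry N FB b 0 m r Hm Hr). reflexivity.
Qed.

(* The output of an impulse response only sees block [0], through [sqrt (alpha L)]. *)
Lemma H2_integrand_modal s N A B U lam L alpha t :
  (1 <= s)%nat -> meq N N L (mmul N (mmul N U (mdiag lam)) (mtr U)) ->
  msym N (msqrt N (mscale alpha L)) ->
  meq N N (mmul N (msqrt N (mscale alpha L)) (msqrt N (mscale alpha L))) (mscale alpha L) ->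
  trace N (mmul (s * N)
             (mmul N (mmul (s * N) (mmul (s * N) (C_std N (mscale alpha L)) (mexp (s * N) A t)) B) (mtr B))
             (mmul (s * N) (mexp (s * N) (mtr A) t) (mtr (C_std N (mscale alpha L)))))
  = alpha * rsum N (fun r => rsum N (fun k => lam k * modal_coord (s * N) A B U N r 0 k t ^ 2)).
Proof.
  intros Hs HL HS HSS. rewrite H2_integrand_impulse, rsum_swap, <- rsum_scal_l.
  apply rsum_ext; intros r Hr.
  set (x := fun j => impulse_response (s * N) A B r t j).
  rewrite (rsum_ext N _ (fun i => (rsum N (fun j => msqrt N (mscale alpha L) i j * x j)) ^ 2)).
  - apply (quad_form_msqrt N U lam L HL); auto.
  - intros i Hi. f_equal. rewrite rsum_blocks.
    destruct s as [|s]; [lia|]. rewrite (rsum_split 1 s (fun b => rsum N _)). cbn [rsum].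
    rewrite (rsum_zero s), Rplus_0_r, Rplus_0_l.
    + apply rsum_ext; intros j Hj. unfold C_std. rewrite blk_entry_row0; auto.
    + intros b Hb. apply rsum_zero; intros j Hj.
      unfold C_std. rewrite blk_entry_row0 by auto. apply Rmult_0_l.
Qed.

Lemma ex_derive_rsum n (f : nat -> R -> R) t :
  (forall l, (l < n)%nat -> ex_derive (f l) t) -> ex_derive (fun s => rsum n (fun l => f l s)) t.
Proof.
  intros H. eexists. apply is_derive_rsum. intros l Hl. apply Derive_correct, H, Hl.
Qed.

Lemma inverse_time_decay_rsum n (f : nat -> R -> R) :
  (forall l, (l < n)%nat -> exists K, forall t, 0 < t -> Rabs (f l t) <= K / t) ->
  exists K, forall t, 0 < t -> Rabs (rsum n (fun l => f l t)) <= K / t.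
Proof.
  induction n; intros H.
  - exists 0. intros t Ht. simpl. rewrite Rabs_R0. unfold Rdiv. lra.
  - destruct IHn as [K1 H1]; [intros; apply H; lia|].
    destruct (H n ltac:(lia)) as [K2 H2]. exists (K1 + K2). intros t Ht. simpl.
    eapply Rle_trans; [apply Rabs_triang|]. specialize (H1 t Ht). specialize (H2 t Ht).
    replace ((K1 + K2) / t) with (K1 / t + K2 / t) by (field; lra). lra.
Qed.

Lemma modal_coord_ex_derive s N A B U r b k t : (b < s)%nat ->
  ex_derive (fun u => modal_coord (s * N) A B U N r b k u) t.
Proof.
  intros Hb. apply ex_derive_rsum; intros m Hm. apply ex_derive_scal.
  eexists. apply impulse_response_deriv. nia.
Qed.

Lemma H2sq_of_modal_lyapunov s N A B U lam L alpha (W : nat -> nat -> R -> R) :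
  (1 <= s)%nat -> meq N N L (mmul N (mmul N U (mdiag lam)) (mtr U)) ->
  msym N (msqrt N (mscale alpha L)) ->
  meq N N (mmul N (msqrt N (mscale alpha L)) (msqrt N (mscale alpha L))) (mscale alpha L) ->
  (forall r k t, (r < N)%nat -> (k < N)%nat ->
     is_derive (W r k) t (- lam k * modal_coord (s * N) A B U N r 0 k t ^ 2)) ->
  (forall r k, (r < N)%nat -> (k < N)%nat -> exists K, forall t, 0 < t -> Rabs (W r k t) <= K / t) ->
  H2sq_is (s * N) N N A B (C_std N (mscale alpha L)) (alpha * rsum N (fun r => rsum N (fun k => W r k 0))).
Proof.
  intros Hs HL HS HSS HWd HWK. unfold H2sq_is.
  match goal with |- improper_int_0_inf ?F _ =>
    replace F with (fun t => alpha * rsum N (fun r => rsum N (fun k =>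
                      lam k * modal_coord (s * N) A B U N r 0 k t ^ 2)))
      by (apply functional_extensionality; intros t; symmetry; apply H2_integrand_modal; auto)
  end.
  apply (improper_int_of_antiderivative _ (fun t => alpha * rsum N (fun r => rsum N (fun k => W r k t)))).
  - intros t. eapply is_derive_eq.
    + apply is_derive_scal, is_derive_rsum; intros r Hr. apply is_derive_rsum; intros k Hk. apply HWd; auto.
    + rewrite Ropp_mult_distr_r, <- rsum_opp. f_equal. apply rsum_ext; intros r Hr.
      rewrite <- rsum_opp. apply rsum_ext; intros; ring.
  - intros t. apply ex_derive_scal, ex_derive_rsum; intros r Hr. apply ex_derive_rsum; intros k Hk.
    apply ex_derive_scal, ex_derive_pow, modal_coord_ex_derive; lia.
  - apply (inverse_time_decay_le _ (fun t => Rabs (rsum N (fun r => rsum N (fun k => W r k t)))) (Rabs alpha));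
      [apply Rabs_pos | intros; rewrite Rabs_mult; lra |].
    apply inverse_time_decay_rsum; intros r Hr. apply inverse_time_decay_rsum; auto.
Qed.

Lemma modal_coord_B_std_0 s N A tau U r b k : (b < s)%nat -> (r < N)%nat ->
  modal_coord (s * N) A (B_std N tau) U N r b k 0 = if Nat.eqb b 1 then U r k / tau else 0.
Proof.
  intros Hb Hr. unfold B_std. rewrite modal_coord_0 by auto.
  destruct b as [|[|b]]; cbn -[rsum];
    try (apply rsum_zero; intros; unfold mzero; ring).
  unfold mscale. rewrite (rsum_ext N _ (fun m => U m k * mid m r * (1 / tau))) by (intros; ring).
  rewrite rsum_scal_r, (rsum_mid_r N r (fun m => U m k)) by auto. unfold Rdiv; ring.
Qed.

Section StdModes.

Variables (N : nat) (m tau : R) (U : Mat) (lam : nat -> R) (L B : Mat).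
Hypothesis HU : meq N N (mmul N (mtr U) U) mid.
Hypothesis HL : meq N N L (mmul N (mmul N U (mdiag lam)) (mtr U)).

Let x r b n t := modal_coord (2 * N) (A_std N m tau L) B U N r b n t.

Lemma std_mode_ode_q r n t : is_derive (x r 0 n) t (x r 1 n t).
Proof.
  eapply is_derive_eq; [apply (modal_coord_deriv 2 N); lia|].
  unfold x, modal_coord. apply rsum_ext; intros i Hi. f_equal. cbn [rsum].
  rewrite (rsum_zero N (fun j => mzero i j * _)) by (intros; apply Rmult_0_l).
  rewrite rsum_mid_l, !Rplus_0_l by auto. reflexivity.
Qed.

Lemma std_mode_ode_p r n t : (n < N)%nat ->
  is_derive (x r 1 n) t (- (m / tau * lam n) * x r 0 n t - 1 / tau * x r 1 n t).
Proof.
  intros Hn. eapply is_derive_eq; [apply (modal_coord_deriv 2 N); lia|].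
  unfold x, modal_coord, A_std. set (y := impulse_response (2 * N) _ B r t).
  rewrite (rsum_ext N _ (fun i => - (m / tau) * (U i n * rsum N (fun j => L i j * y (0 * N + j)%nat))
                                  + - (1 / tau) * (U i n * y (1 * N + i)%nat))).
  2:{ intros i Hi. cbn [rsum]. unfold mscale.
      rewrite (rsum_ext N (fun j => - (m / tau) * L i j * _) (fun j => - (m / tau) * (L i j * y (0 * N + j)%nat)))
        by (intros; ring).
      rewrite (rsum_ext N (fun j => - (1 / tau) * mid i j * _) (fun j => - (1 / tau) * (mid i j * y (1 * N + j)%nat)))
        by (intros; ring).
      rewrite !rsum_scal_l, rsum_mid_l by auto. ring. }
  rewrite rsum_plus, !rsum_scal_l, (eigen_coord_mul N U lam L HU HL n (fun j => y (0 * N + j)%nat)) by auto.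
  ring.
Qed.

Lemma std_modal_lyap_spec r n : 0 < m -> 0 < tau -> (n < N)%nat -> 0 < lam n ->
  (forall t, is_derive (fun s => std_lyap (m / tau * lam n) (1 / tau) (lam n) (x r 0%nat n s) (x r 1%nat n s)) t
                       (- lam n * x r 0%nat n t ^ 2)) /\
  exists K, forall t, 0 < t ->
    Rabs (std_lyap (m / tau * lam n) (1 / tau) (lam n) (x r 0%nat n t) (x r 1%nat n t)) <= K / t.
Proof.
  intros Hm Htau Hn Hl.
  assert (0 < m / tau * lam n) by (apply Rmult_lt_0_compat; [apply Rdiv_lt_0_compat|]; lra).
  assert (0 < 1 / tau) by (apply Rdiv_lt_0_compat; lra).
  split; [intros t; apply std_lyap_deriv | apply std_lyap_decay]; auto;
    intros u; first [apply std_mode_ode_q | apply std_mode_ode_p; auto].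
Qed.

End StdModes.

Section DapiModes.

Variables (N : nat) (m tau k gamma : R) (U : Mat) (lam : nat -> R) (L B : Mat).
Hypothesis HU : meq N N (mmul N (mtr U) U) mid.
Hypothesis HL : meq N N L (mmul N (mmul N U (mdiag lam)) (mtr U)).

Let x r b n t := modal_coord (3 * N) (A_dapi N m tau k L (mscale gamma L)) B U N r b n t.

Lemma dapi_mode_ode_q r n t : is_derive (x r 0 n) t (x r 1 n t).
Proof.
  eapply is_derive_eq; [apply (modal_coord_deriv 3 N); lia|].
  unfold x, modal_coord. apply rsum_ext; intros i Hi. f_equal. cbn [rsum].
  rewrite !(rsum_zero N (fun j => mzero i j * _)) by (intros; apply Rmult_0_l).
  rewrite rsum_mid_l, !Rplus_0_l, Rplus_0_r by auto. reflexivity.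
Qed.

Lemma dapi_mode_ode_p r n t : (n < N)%nat ->
  is_derive (x r 1 n) t
    (- (m / tau * lam n) * x r 0 n t - 1 / tau * x r 1 n t + 1 / tau * x r 2 n t).
Proof.
  intros Hn. eapply is_derive_eq; [apply (modal_coord_deriv 3 N); lia|].
  unfold x, modal_coord, A_dapi. set (y := impulse_response (3 * N) _ B r t).
  rewrite (rsum_ext N _ (fun i => - (m / tau) * (U i n * rsum N (fun j => L i j * y (0 * N + j)%nat))
                                  + - (1 / tau) * (U i n * y (1 * N + i)%nat)
                                  + (1 / tau) * (U i n * y (2 * N + i)%nat))).
  2:{ intros i Hi. cbn [rsum]. unfold mscale.
      rewrite (rsum_ext N (fun j => - (m / tau) * L i j * _) (fun j => - (m / tau) * (L i j * y (0 * N + j)%nat)))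
        by (intros; ring).
      rewrite (rsum_ext N (fun j => - (1 / tau) * mid i j * _) (fun j => - (1 / tau) * (mid i j * y (1 * N + j)%nat)))
        by (intros; ring).
      rewrite (rsum_ext N (fun j => 1 / tau * mid i j * _) (fun j => 1 / tau * (mid i j * y (2 * N + j)%nat)))
        by (intros; ring).
      rewrite !rsum_scal_l, !rsum_mid_l by auto. ring. }
  rewrite !rsum_plus, !rsum_scal_l, (eigen_coord_mul N U lam L HU HL n (fun j => y (0 * N + j)%nat)) by auto.
  ring.
Qed.

Lemma dapi_mode_ode_r r n t : (n < N)%nat ->
  is_derive (x r 2 n) t (- (1 / k) * x r 1 n t - gamma * lam n / k * x r 2 n t).
Proof.
  intros Hn. eapply is_derive_eq; [apply (modal_coord_deriv 3 N); lia|].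
  unfold x, modal_coord, A_dapi. set (y := impulse_response (3 * N) _ B r t).
  rewrite (rsum_ext N _ (fun i => - (1 / k) * (U i n * y (1 * N + i)%nat)
                                  + (- (1 / k) * gamma) * (U i n * rsum N (fun j => L i j * y (2 * N + j)%nat)))).
  2:{ intros i Hi. cbn [rsum]. unfold mscale.
      rewrite (rsum_zero N (fun j => mzero i j * _)) by (intros; unfold mzero; ring).
      rewrite (rsum_ext N (fun j => - (1 / k) * mid i j * _) (fun j => - (1 / k) * (mid i j * y (1 * N + j)%nat)))
        by (intros; ring).
      rewrite (rsum_ext N (fun j => - (1 / k) * (gamma * L i j) * _)
                 (fun j => (- (1 / k) * gamma) * (L i j * y (2 * N + j)%nat))) by (intros; ring).
      rewrite !rsum_scal_l, rsum_mid_l by auto. ring. }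
  rewrite rsum_plus, !rsum_scal_l, (eigen_coord_mul N U lam L HU HL n (fun j => y (2 * N + j)%nat)) by auto.
  unfold Rdiv; ring.
Qed.

Lemma dapi_modal_lyap_spec r n : 0 < m -> 0 < tau -> 0 < k -> 0 < gamma -> (n < N)%nat -> 0 < lam n ->
  (forall t, is_derive (fun s => dapi_lyap (m / tau * lam n) (1 / tau) (1 / k) (gamma * lam n / k) (lam n)
                                   (x r 0%nat n s) (x r 1%nat n s) (x r 2%nat n s)) t
                       (- lam n * x r 0%nat n t ^ 2)) /\
  exists K, forall t, 0 < t ->
    Rabs (dapi_lyap (m / tau * lam n) (1 / tau) (1 / k) (gamma * lam n / k) (lam n)
                    (x r 0%nat n t) (x r 1%nat n t) (x r 2%nat n t)) <= K / t.
Proof.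
  intros Hm Htau Hk Hg Hn Hl.
  assert (0 < m / tau * lam n) by (apply Rmult_lt_0_compat; [apply Rdiv_lt_0_compat|]; lra).
  assert (0 < gamma * lam n / k) by (apply Rdiv_lt_0_compat; [apply Rmult_lt_0_compat|]; lra).
  assert (0 < 1 / tau) by (apply Rdiv_lt_0_compat; lra).
  assert (0 < 1 / k) by (apply Rdiv_lt_0_compat; lra).
  split; [intros t; apply dapi_lyap_deriv | apply dapi_lyap_decay]; auto; intros u;
    first [apply dapi_mode_ode_q | apply dapi_mode_ode_p; auto | apply dapi_mode_ode_r; auto].
Qed.

End DapiModes.

Lemma std_lyap_impulse m tau l u : 0 < m -> 0 < tau -> 0 < l ->
  std_lyap (m / tau * l) (1 / tau) l 0 (u / tau) = u ^ 2 / (2 * m).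
Proof. intros Hm Htau Hl. unfold std_lyap, quad3. field; lra. Qed.

Lemma dapi_lyap_impulse m tau k gamma l u : 0 < m -> 0 < tau -> 0 < k -> 0 < gamma -> 0 < l ->
  dapi_lyap (m / tau * l) (1 / tau) (1 / k) (gamma * l / k) l 0 (u / tau) 0
  = u ^ 2 / (2 * m) * (1 / (1 + (gamma * tau * l + k) / (gamma * l * (gamma * tau * l + k) + k ^ 2 * m * l))).
Proof.
  intros Hm Htau Hk Hg Hl.
  assert (0 < gamma * tau * l) by (repeat apply Rmult_lt_0_compat; lra).
  assert (0 < gamma * l * (gamma * tau * l + k) + k ^ 2 * m * l).
  { assert (0 < gamma * l) by nra. assert (0 < k ^ 2 * m * l) by (repeat apply Rmult_lt_0_compat; nra). nra. }
  unfold dapi_lyap, quad3; simpl. field; repeat split; lra.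
Qed.

Lemma std_H2sq N U lam L m tau alpha :
  (1 <= N)%nat -> meq N N (mmul N (mtr U) U) mid -> meq N N L (mmul N (mmul N U (mdiag lam)) (mtr U)) ->
  lam 0%nat = 0 -> (forall n, (1 <= n)%nat -> (n < N)%nat -> 0 < lam n) ->
  0 < m -> 0 < tau -> 0 < alpha ->
  H2sq_is (2 * N) N N (A_std N m tau L) (B_std N tau) (C_std N (mscale alpha L))
          (alpha / (2 * m) * INR (N - 1)).
Proof.
  intros HN HU HL Hl0 Hlpos Hm Htau Hal.
  destruct (msqrt_scale_spec N U lam L HU HL alpha) as [[HS _] HSS]; [lra | |].
  { intros [|n] Hn; [lra | apply Rlt_le, Hlpos; lia]. }
  set (x := fun r b n t => modal_coord (2 * N) (A_std N m tau L) (B_std N tau) U N r b n t).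
  (* The zero mode is unobservable ([lam 0 = 0]) and has no Lyapunov form. *)
  set (W := fun r n t => if Nat.eqb n 0 then 0 else
              std_lyap (m / tau * lam n) (1 / tau) (lam n) (x r 0%nat n t) (x r 1%nat n t)).
  replace (alpha / (2 * m) * INR (N - 1)) with (alpha * rsum N (fun r => rsum N (fun n => W r n 0))).
  { apply (H2sq_of_modal_lyapunov 2 N _ _ U lam L alpha W); auto;
      intros r n; [intros t|]; intros Hr Hn; unfold W; destruct (Nat.eqb_spec n 0) as [->|Hn0].
    - rewrite Hl0. eapply is_derive_eq; [apply (is_derive_const 0) | rewrite Ropp_0, Rmult_0_l; reflexivity].
    - apply (std_modal_lyap_spec N m tau U lam L); auto; apply Hlpos; lia.
    - exists 0. intros t Ht. rewrite Rabs_R0. unfold Rdiv; lra.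
    - apply (std_modal_lyap_spec N m tau U lam L); auto; apply Hlpos; lia. }
  rewrite (rsum_ext N _ (fun r => rsum N (fun n => (if Nat.eqb n 0 then 0 else / (2 * m)) * (U r n * U r n)))).
  - rewrite (rsum_cols_sqr N U HU), rsum_indicator_const by auto. field; lra.
  - intros r Hr. apply rsum_ext; intros n Hn. unfold W, x.
    destruct (Nat.eqb_spec n 0) as [->|Hn0]; [ring|].
    rewrite !modal_coord_B_std_0 by lia. cbn [Nat.eqb]. rewrite std_lyap_impulse by (auto; apply Hlpos; lia).
    unfold Rdiv; ring.
Qed.

Lemma dapi_H2sq N U lam L m tau k alpha gamma :
  (1 <= N)%nat -> meq N N (mmul N (mtr U) U) mid -> meq N N L (mmul N (mmul N U (mdiag lam)) (mtr U)) ->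
  lam 0%nat = 0 -> (forall n, (1 <= n)%nat -> (n < N)%nat -> 0 < lam n) ->
  0 < m -> 0 < tau -> 0 < k -> 0 < alpha -> 0 < gamma ->
  H2sq_is (3 * N) N N (A_dapi N m tau k L (mscale gamma L)) (B_dapi N tau) (C_dapi N (mscale alpha L))
          (alpha / (2 * m) *
             rsum N (fun n => if Nat.eqb n 0 then 0 else
               1 / (1 + (gamma * tau * lam n + k) /
                        (gamma * lam n * (gamma * tau * lam n + k) + k ^ 2 * m * lam n)))).
Proof.
  intros HN HU HL Hl0 Hlpos Hm Htau Hk Hal Hg.
  change (B_dapi N tau) with (B_std N tau). change (C_dapi N (mscale alpha L)) with (C_std N (mscale alpha L)).
  destruct (msqrt_scale_spec N U lam L HU HL alpha) as [[HS _] HSS]; [lra | |].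
  { intros [|n] Hn; [lra | apply Rlt_le, Hlpos; lia]. }
  set (x := fun r b n t => modal_coord (3 * N) (A_dapi N m tau k L (mscale gamma L)) (B_std N tau) U N r b n t).
  set (W := fun r n t => if Nat.eqb n 0 then 0 else
              dapi_lyap (m / tau * lam n) (1 / tau) (1 / k) (gamma * lam n / k) (lam n)
                        (x r 0%nat n t) (x r 1%nat n t) (x r 2%nat n t)).
  replace (alpha / (2 * m) * rsum N _) with (alpha * rsum N (fun r => rsum N (fun n => W r n 0))).
  { apply (H2sq_of_modal_lyapunov 3 N _ _ U lam L alpha W); auto;
      intros r n; [intros t|]; intros Hr Hn; unfold W; destruct (Nat.eqb_spec n 0) as [->|Hn0].
    - rewrite Hl0. eapply is_derive_eq; [apply (is_derive_const 0) | rewrite Ropp_0, Rmult_0_l; reflexivity].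
    - apply (dapi_modal_lyap_spec N m tau k gamma U lam L); auto; apply Hlpos; lia.
    - exists 0. intros t Ht. rewrite Rabs_R0. unfold Rdiv; lra.
    - apply (dapi_modal_lyap_spec N m tau k gamma U lam L); auto; apply Hlpos; lia. }
  rewrite (rsum_ext N _ (fun r => rsum N (fun n =>
             (if Nat.eqb n 0 then 0 else / (2 * m) *
               (1 / (1 + (gamma * tau * lam n + k) /
                         (gamma * lam n * (gamma * tau * lam n + k) + k ^ 2 * m * lam n))))
             * (U r n * U r n)))).
  - rewrite (rsum_cols_sqr N U HU), <- (rsum_scal_l N (alpha / (2 * m))), <- rsum_scal_l.
    apply rsum_ext; intros n Hn. destruct (Nat.eqb n 0); [ring | unfold Rdiv; ring].
  - intros r Hr. apply rsum_ext; intros n Hn. unfold W, x.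
    destruct (Nat.eqb_spec n 0) as [->|Hn0]; [ring|].
    rewrite !modal_coord_B_std_0 by lia. cbn [Nat.eqb]. rewrite dapi_lyap_impulse by (auto; apply Hlpos; lia).
    unfold Rdiv; ring.
Qed.

Lemma nondecreasing_pos (lam : nat -> R) N : 0 < lam 1%nat ->
  (forall n, (1 <= n)%nat -> (n + 1 < N)%nat -> lam n <= lam (n + 1)%nat) ->
  forall n, (1 <= n)%nat -> (n < N)%nat -> 0 < lam n.
Proof.
  intros H1 Hsort n Hn. induction n as [|n IH]; [lia|]. intros HnN.
  destruct n; [exact H1|]. pose proof (Hsort (S n) ltac:(lia) ltac:(lia)).
  replace (S (S n)) with (S n + 1)%nat by lia. specialize (IH ltac:(lia) ltac:(lia)). lra.
Qed.

Theorem theorem1 (N : nat) (b : Mat) (lam : nat -> R) (m tau k alpha gamma : R) :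
  (2 <= N)%nat ->
  (forall i j, (i < N)%nat -> (j < N)%nat -> b i j = b j i) ->
  (forall i j, (i < N)%nat -> (j < N)%nat -> 0 <= b i j) ->
  connected N b ->
  sym_eigenvalues N (lap N b) lam ->
  lam 0%nat = 0 -> 0 < lam 1%nat ->
  (forall n, (1 <= n)%nat -> (n + 1 < N)%nat -> lam n <= lam (n + 1)%nat) ->
  0 < m -> 0 < tau -> 0 < k -> 0 < alpha -> 0 < gamma ->
  H2sq_is (2 * N) N N (A_std N m tau (lap N b)) (B_std N tau)
          (C_std N (mscale alpha (lap N b)))
          (alpha / (2 * m) * INR (N - 1))
  /\
  H2sq_is (3 * N) N N
          (A_dapi N m tau k (lap N b) (mscale gamma (lap N b))) (B_dapi N tau)
          (C_dapi N (mscale alpha (lap N b)))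
          (alpha / (2 * m) *
             rsum N (fun n => if Nat.eqb n 0 then 0 else
               1 / (1 + (gamma * tau * lam n + k) /
                        (gamma * lam n * (gamma * tau * lam n + k)
                         + k ^ 2 * m * lam n)))).
Proof.
  intros HN _ _ _ [U [HU HL]] Hl0 Hl1 Hsort Hm Htau Hk Hal Hg.
  pose proof (nondecreasing_pos lam N Hl1 Hsort) as Hlpos.
  split; [apply (std_H2sq N U lam) | apply (dapi_H2sq N U lam)]; auto; lia.
Qed.
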